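(* Let $f(w)=\sum_{n=0}^dc_nw^n$ be a polynomial with complex coefficients and, for $(i,j)\in J$, let $f(\ell_{i,j}^* ):=c_01_{i,j}+\sum_{n\ge1}c_n(\ell_{i,j}^* )^n$. Let $L=\sum_{(i,j)\in J}\ell_{i,j}$ and $\omega_k(z)=(1-zL)^{-1}e_{k,k}$ for $|z|$ small enough. Then for every $j$ with $(j,j)\in J$, $$f(\ell_{j,j}^* )\omega_j(z)=f(\alpha_{j,j}^2z)1_{j,j}\omega_j(z)+\alpha_{j,j}\,Df(\alpha_{j,j}^2z)\,\Omega,$$ where $Df(z)=\frac{f(z)-f(0)}{z}$; and for every off-diagonal $(i,j)\in J$ ($i\neq j$) and every $k$, $$f(\ell_{i,j}^* )\omega_k(z)=f(\alpha_{i,j}^2z)1_{i,j}\omega_k(z).$$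
   Context: Fock space. Let $J\subseteq\{1,2\}\times\{1,2\}$, $(\alpha_{i,j})_{(i,j)\in J}$ positive reals, $\{e_{i,j}:(i,j)\in J\}$ orthonormal vectors and $\mathcal{F}$ the full Fock space over $\bigoplus_{(i,j)\in J}\mathbb{C}e_{i,j}$ with vacuum $\Omega$. The strongly matricially free Fock space $\mathcal{N}\subseteq\mathcal{F}$ is the closed span of $\Omega$ and all simple tensors $e_{i_1,i_2}^{\otimes n_1}\otimes e_{i_2,i_3}^{\otimes n_2}\otimes\dots\otimes e_{i_{m-1},i_m}^{\otimes n_{m-1}}\otimes e_{i_m,i_m}^{\otimes n_m}$ ($m\ge1$, $n_k\ge1$, $i_1\neq\dots\neq i_m$, all pairs in $J$). With $P$ the projection onto $\mathcal{N}$ and $\ell(e)w=e\otimes w$, set $\ell_{i,j}=\alpha_{i,j}P\ell(e_{i,j})|_{\mathcal{N}}$ with adjoints $\ell_{i,j}^*$. Let $\mathcal{N}_{i,j}$ be the closed span of those simple tensors whose first factor is $e_{i,j}$; $1_{j,j}$ is the projection onto $\mathbb{C}\Omega\oplus\mathcal{N}_{j,j}$ and, for $i\ne j$, $1_{i,j}$ is the projection onto $\mathcal{N}\ominus(\mathbb{C}\Omega\oplus\mathcal{N}_{i,i})$. The vectors $e_{k,k}$ used in $\omega_k$ are those with $(k,k)\in J$. *)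

From HB Require Import structures.
From mathcomp Require Import all_boot all_order all_algebra.
From mathcomp Require Import boolp.
Set Implicit Arguments. Unset Strict Implicit. Unset Printing Implicit Defensive.
Import Order.TTheory GRing.Theory Num.Theory.
Local Open Scope ring_scope.

(* Index pairs (i,j) in {1,2}x{1,2}, encoded as 'I_2 * 'I_2 (1 ~ 0, 2 ~ 1). *)
Definition idx := ('I_2 * 'I_2)%type.
(* Simple tensors e_{a1} (x) ... (x) e_{an} of the orthonormal basis of the
   full Fock space are indexed by words; [::] is the vacuum Omega. *)
Definition word := seq idx.
(* A vector is given by its coordinates in this orthonormal basis. *)
Definition vec (C : Type) := word -> C.

Section Fock.
Variable C : numClosedFieldType.
Variable J : {set idx}.
Variable alpha : idx -> C.

(* The word e_{i_1,i_2}^{n_1} ... e_{i_{m-1},i_m}^{n_{m-1}} e_{i_m,i_m}^{n_m}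
   (blocks indexed k = 0..m-1). *)
Definition block_letter (m : nat) (i : nat -> 'I_2) (k : nat) : idx :=
  if (k.+1 < m)%N then (i k, i k.+1) else (i k, i k).
Definition blockword (m : nat) (i : nat -> 'I_2) (n : nat -> nat) : word :=
  flatten [seq nseq (n k) (block_letter m i k) | k <- iota 0 m].

(* u indexes a basis vector of the strongly matricially free Fock space N. *)
Definition inN (u : word) : Prop :=
  u = [::] \/
  exists (m : nat) (i : nat -> 'I_2) (n : nat -> nat),
    [/\ (0 < m)%N,
        (forall k, (k < m)%N -> (0 < n k)%N),
        (forall k, (k.+1 < m)%N -> i k != i k.+1),
        (forall k, (k < m)%N -> block_letter m i k \in J)
      & u = blockword m i n].

(* Orthogonal projection onto the closed span of the basis vectors u in N
   with keep u. *)
Definition projN (keep : word -> bool) (v : vec C) : vec C :=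
  fun u => if `[< inN u >] && keep u then v u else 0.

Definition P (v : vec C) : vec C := projN (fun _ => true) v.

(* 1_{j,j} : projection onto C Omega (+) N_{j,j};
   1_{i,j} (i != j) : projection onto N (-) (C Omega (+) N_{i,i}). *)
Definition one_ (a : idx) : vec C -> vec C :=
  if a.1 == a.2 then projN (fun u => if u is b :: _ then b == a else true)
  else projN (fun u => if u is b :: _ then b != (a.1, a.1) else false).

(* left creation l(e_a) w = e_a (x) w and its adjoint *)
Definition lcr (a : idx) (v : vec C) : vec C :=
  fun u => if u is b :: t then (if b == a then v t else 0) else 0.
Definition lann (a : idx) (v : vec C) : vec C := fun u => v (a :: u).

Definition ell (a : idx) (v : vec C) : vec C := fun u => alpha a * P (lcr a v) u.
Definition ell_star (a : idx) (v : vec C) : vec C :=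
  fun u => alpha a * P (lann a v) u.

Definition Lop (v : vec C) : vec C := fun u => \sum_(a in J) ell a v u.

Definition delta (s : word) : vec C := fun u => if u == s then 1 else 0.
Definition Omega : vec C := delta [::].
Definition e_ (a : idx) : vec C := delta [:: a].

(* w = omega_k(z) = (1 - z L)^{-1} e_{k,k}, i.e. (1 - z L) w = e_{k,k} *)
Definition is_omega (k : 'I_2) (z : C) (w : vec C) : Prop :=
  forall u, w u - z * Lop w u = e_ (k, k) u.

Definition fell (p : {poly C}) (a : idx) (v : vec C) : vec C :=
  fun u => p`_0 * one_ a v u
           + \sum_(1 <= n < size p) p`_n * iter n (ell_star a) v u.
End Fock.

(* Df(z) = (f(z) - f(0))/z, as the polynomial sum_{n>=1} c_n z^{n-1} *)
Definition Dpoly (C : numClosedFieldType) (p : {poly C}) : {poly C} :=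
  \poly_(i < (size p).-1) p`_i.+1.

From HB Require Import structures.
From mathcomp Require Import all_boot all_order all_algebra.
From mathcomp Require Import boolp ring.
Set Implicit Arguments. Unset Strict Implicit. Unset Printing Implicit Defensive.
Import Order.TTheory GRing.Theory Num.Theory.

(* The basis words of N are exactly the words recognised by a local rule
   ([Nword]): every letter lies in J, consecutive letters obey [follows], and
   the last letter is diagonal.  Read coordinatewise, (1 - z L) w = e_{k,k}
   says that w vanishes off N and at the vacuum, and w (b :: c :: t) =
   z alpha_b w (c :: t); hence w (a^n u) = (z alpha_a)^n w u whenever a^n u
   is in N.  As (l_a^* )^n w at u is alpha_a^n w (a^n u), at a nonempty word
   u the n-th term of f(l_a^* ) w is c_n (alpha_a^2 z)^n w u if a may precede
   u, i.e. if u is in the range of 1_a, and 0 otherwise.  At the vacuum the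
   words a^n lie in N only for diagonal a, where w (a^n) = (z alpha_a)^(n-1)
   produces the term alpha_a Df(alpha_a^2 z) Omega. *)

Section NWords.
Variable J : {set idx}.

(* In a word of N a diagonal letter is followed only by itself, and a letter
   (i,j) with i != j by (i,j) or by some (j,_); with two indices the latter
   means "anything but (i,i)". *)
Definition follows (a b : idx) : bool :=
  if a.1 == a.2 then b == a else b != (a.1, a.1).

Fixpoint Nword (u : word) : bool :=
  match u with
  | [::] => true
  | a :: t => (a \in J) && match t with
                          | [::] => a.1 == a.2
                          | b :: _ => follows a b && Nword t
                          end
  end.

Lemma follows_refl a : follows a a.
Proof.
rewrite /follows; case: ifP => [_|/negbT a12]; first exact: eqxx.
by rewrite [a]surjective_pairing xpair_eqE eqxx eq_sym.
Qed.

Lemma ord2_neq (x y z : 'I_2) : x != y -> z != x -> z = y.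
Proof.
by case: x => [[|[|?]] ?] //; case: y => [[|[|?]] ?] //;
  case: z => [[|[|?]] ?] //= _ _; apply/val_inj.
Qed.

Lemma follows_neq a b : follows a b -> b != a -> a.1 != a.2 /\ b.1 = a.2.
Proof.
rewrite /follows; case: ifP => [_ /eqP-> | /negbT a12 ba1 ba].
  by rewrite eqxx.
split=> //; apply: (ord2_neq a12); apply: contra_neq ba => b1.
have b2 : b.2 = a.2.
  apply: (ord2_neq a12); apply: contra_neq ba1 => b2.
  by rewrite [b]surjective_pairing b1 b2.
by rewrite [b]surjective_pairing [a]surjective_pairing b1 b2.
Qed.

Lemma Nword_cons2 a b t :
  Nword (a :: b :: t) = [&& a \in J, follows a b & Nword (b :: t)].
Proof. by []. Qed.

Lemma Nword_behead a t : Nword (a :: t) -> Nword t.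
Proof. by case: t => //= b t /and3P[]. Qed.

Lemma Nword_catr s t : Nword (s ++ t) -> Nword t.
Proof. by elim: s => //= a s IH /Nword_behead /IH. Qed.

Lemma Nword_nseq_cons a n t : a \in J ->
  Nword (a :: nseq n a ++ t) = Nword (a :: t).
Proof.
by move=> aJ; elim: n => //= n ->; rewrite aJ follows_refl.
Qed.

Lemma Nword_nseqS a n : a \in J -> Nword (nseq n.+1 a) = (a.1 == a.2).
Proof.
move=> aJ; rewrite -[nseq _ _]cats0 -[_ ++ _]/(a :: nseq n a ++ [::]).
by rewrite Nword_nseq_cons //= aJ.
Qed.

Lemma block_letter_fst m i k : (block_letter m i k).1 = i k.
Proof. by rewrite /block_letter; case: ifP. Qed.

Lemma blockwordS m i n :
  blockword m.+1 i n =
  nseq (n 0%N) (block_letter m.+1 i 0) ++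
  blockword m (fun k => i k.+1) (fun k => n k.+1).
Proof.
rewrite /blockword /= -[in LHS](addn0 1%N) iotaDl -map_comp.
by congr (_ ++ flatten _); apply: eq_map.
Qed.

Lemma blockword_head m i n : (0 < m)%N -> (0 < n 0%N)%N ->
  exists t, blockword m i n = block_letter m i 0 :: t.
Proof.
by case: m => // m _; rewrite blockwordS; case: (n 0%N) => // k _; eexists.
Qed.

Lemma inN_Nword u : inN J u -> Nword u.
Proof.
case=> [->//|[m [i [n [m0 n0 ii iJ ->]]]]].
elim: m i n m0 n0 ii iJ => // m IH i n _ n0 ii iJ.
rewrite blockwordS; have := n0 0%N isT; case: (n 0%N) => // k _.
rewrite Nword_nseq_cons ?iJ //.
case: m IH n0 ii iJ => [|m] IH n0 ii iJ.
  by have := iJ 0%N isT; rewrite /= => ->; exact: eqxx.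
have [t Et] := @blockword_head m.+1 (fun k => i k.+1) (fun k => n k.+1)
  (ltn0Sn m) (n0 1%N isT).
have i01 := ii 0%N isT.
rewrite Et Nword_cons2 -Et iJ //= IH // => [|l|l|l]; last 3 first.
- exact: (n0 l.+1).
- exact: (ii l.+1).
- exact: (iJ l.+1).
rewrite andbT /follows [block_letter m.+2 i 0]/= (negbTE i01).
by apply: contra_neq i01 => /(congr1 fst); rewrite !block_letter_fst => ->.
Qed.

Lemma Nword_inN u : Nword u -> inN J u.
Proof.
elim: u => [|a [|b t] IH]; first by left.
  case/andP=> aJ /eqP a12; right.
  have aE : block_letter 1 (fun=> a.1) 0 = a.
    by rewrite /block_letter /= {2}a12 -surjective_pairing.
  exists 1%N, (fun=> a.1), (fun=> 1%N); split=> // [[|k]|] //; first by rewrite aE.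
  by rewrite /blockword /= aE.
case/and3P=> aJ ab /IH [//|[m [i [n [m0 n0 ii iJ Et]]]]].
have bE : b = block_letter m i 0.
  have [s Es] := blockword_head i m0 (n0 0%N m0).
  by move: Et; rewrite Es => -[].
right; case: (eqVneq b a) => [ba|nba].
  exists m, i, (fun k => if k is 0 then (n 0%N).+1 else n k); split=> //.
    by move=> [|k] // /n0.
  case: m m0 n0 ii iJ Et bE => // m _ n0 ii iJ Et bE.
  by rewrite Et !blockwordS /= -bE ba.
have [a12 ba2] := follows_neq ab nba.
have aE : a = (a.1, i 0).
  by rewrite -(block_letter_fst m) -bE ba2 -surjective_pairing.
exists m.+1, (fun k => if k is k'.+1 then i k' else a.1),
  (fun k => if k is k'.+1 then n k' else 1%N); split=> //.
- by move=> [|k] // /n0.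
- by move=> [|k] /= kl; [rewrite -(block_letter_fst m) -bE ba2 | exact: ii].
- move=> [|k] kl; last exact: (iJ k).
  by rewrite /block_letter ltnS m0 -aE.
- by rewrite blockwordS /= -Et /block_letter ltnS m0 -aE.
Qed.

Lemma inNE u : `[< inN J u >] = Nword u.
Proof. by apply/asboolP/idP => [/inN_Nword|/Nword_inN]. Qed.

End NWords.

Local Open Scope ring_scope.

Lemma horner_coef_split0 (R : nzRingType) (p : {poly R}) x :
  p.[x] = p`_0 + \sum_(1 <= n < size p) p`_n * x ^+ n.
Proof.
rewrite horner_coef; case E: (size p) => [|s].
  by rewrite big_ord0 big_geq // nth_default ?E // addr0.
by rewrite big_ord_recl big_add1 /= big_mkord expr0 mulr1.
Qed.

Section FockOperators.
Variables (C : numClosedFieldType) (J : {set idx}) (alpha : idx -> C).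

Lemma Lop_nil v : Lop J alpha v [::] = 0.
Proof.
by rewrite /Lop big1 // => a _; rewrite /ell /P /projN /lcr if_same mulr0.
Qed.

Lemma Lop_cons v b t :
  Lop J alpha v (b :: t) = if Nword J (b :: t) then alpha b * v t else 0.
Proof.
rewrite /Lop /ell /P /projN inNE andbT; case: ifP => [bt|_]; last first.
  by rewrite big1 // => a _; rewrite mulr0.
have bJ : b \in J by case/andP: bt.
rewrite (bigD1 b) //= big1 ?addr0 /lcr ?eqxx // => a /andP[_ ab].
by rewrite eq_sym (negbTE ab) mulr0.
Qed.

Lemma one_cons a (v : vec C) b t : a \in J ->
  one_ J a v (b :: t) = if Nword J (a :: b :: t) then v (b :: t) else 0.
Proof.
move=> aJ; rewrite Nword_cons2 aJ /one_ /follows.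
by case: ifP; rewrite /projN inNE andbC.
Qed.

Lemma iter_ell_star a v n u : (forall s, ~~ Nword J s -> v s = 0) ->
  iter n (ell_star J alpha a) v u = alpha a ^+ n * v (nseq n a ++ u).
Proof.
move=> vN; elim: n u => [|n IH] u; first by rewrite mul1r.
rewrite iterS /ell_star /P /projN inNE andbT /lann IH.
have -> : nseq n a ++ a :: u = nseq n.+1 a ++ u by elim: n {IH} => //= n ->.
case: ifP => [_|/negbT uN]; first by rewrite exprS mulrA.
by rewrite vN ?mulr0 //; apply: contra uN; apply: Nword_catr.
Qed.

End FockOperators.

Section Omega.
Variables (C : numClosedFieldType) (J : {set idx}) (alpha : idx -> C).
Variables (k : 'I_2) (z : C) (w : vec C).
Hypotheses (kJ : (k, k) \in J) (hw : is_omega J alpha k z w).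

Lemma omega_notN u : ~~ Nword J u -> w u = 0.
Proof.
move=> uN; have := hw u.
have -> : e_ C (k, k) u = 0.
  by rewrite /e_ /delta; case: eqP => // uE; move: uN; rewrite uE /= kJ eqxx.
by case: u uN => [|b t] // uN; rewrite Lop_cons (negbTE uN) mulr0 subr0.
Qed.

Lemma omega_nil : w [::] = 0.
Proof. by have := hw [::]; rewrite Lop_nil mulr0 subr0. Qed.

Lemma omega_single b : w [:: b] = if b == (k, k) then 1 else 0.
Proof.
have := hw [:: b]; rewrite Lop_cons omega_nil mulr0 if_same mulr0 subr0 => ->.
by rewrite /e_ /delta eqseq_cons andbT.
Qed.

Lemma omega_cons2 b c t : w (b :: c :: t) =
  if Nword J (b :: c :: t) then z * alpha b * w (c :: t) else 0.
Proof.
case: ifP => [bct|/negbT]; last exact: omega_notN.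
move/eqP: (hw (b :: c :: t)); rewrite Lop_cons bct /e_ /delta eqseq_cons andbF.
by rewrite subr_eq0 mulrA => /eqP.
Qed.

Lemma omega_nseqS_cat a n b t : a \in J ->
  w (nseq n.+1 a ++ b :: t) =
  if Nword J (a :: b :: t) then (z * alpha a) ^+ n.+1 * w (b :: t) else 0.
Proof.
move=> aJ; elim: n => [|n IH]; first by rewrite omega_cons2 expr1.
rewrite [nseq n.+2 a ++ _]/= omega_cons2.
rewrite -[a :: nseq n a ++ _]/(nseq n.+1 a ++ _).
rewrite IH (@Nword_nseq_cons J a n.+1) //.
by case: (Nword J _); rewrite ?mulr0 // mulrA -exprS.
Qed.

Lemma omega_nseq_diag n : w (nseq n.+1 (k, k)) = (z * alpha (k, k)) ^+ n.
Proof.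
case: n => [|n]; first by rewrite omega_single eqxx.
rewrite -[n.+2]addn1 nseqD omega_nseqS_cat // omega_single eqxx mulr1.
by rewrite Nword_cons2 /= kJ follows_refl eqxx.
Qed.

Lemma fell_cons p a b t : a \in J ->
  fell J alpha p a w (b :: t) = p.[alpha a ^+ 2 * z] * one_ J a w (b :: t).
Proof.
move=> aJ; rewrite /fell horner_coef_split0 mulrDl; congr (_ + _).
rewrite mulr_suml; apply: eq_big_nat => -[//|n] _.
rewrite iter_ell_star; last exact: omega_notN.
rewrite omega_nseqS_cat // one_cons //; case: ifP => _; last by rewrite !mulr0.
by rewrite -mulrA mulrA -exprMn; congr (_ * (_ ^+ _ * _)); ring.
Qed.

Lemma fell_nil_diag p :
  fell J alpha p (k, k) w [::] =
  alpha (k, k) * (Dpoly p).[alpha (k, k) ^+ 2 * z].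
Proof.
rewrite /fell /one_ eqxx /projN omega_nil if_same mulr0 add0r.
rewrite /Dpoly horner_poly mulr_sumr big_add1 big_mkord; apply: eq_bigr => n _.
rewrite iter_ell_star; last exact: omega_notN.
rewrite cats0 omega_nseq_diag exprS.
have -> : alpha (k, k) ^+ 2 * z = alpha (k, k) * (z * alpha (k, k)) by ring.
by rewrite [(alpha _ * _) ^+ n]exprMn; ring.
Qed.

Lemma fell_nil_offdiag p a : a \in J -> a.1 != a.2 ->
  fell J alpha p a w [::] = 0.
Proof.
move=> aJ a12; rewrite /fell /one_ (negbTE a12) /projN andbF mulr0 add0r.
rewrite big1_seq // => n /andP[_]; rewrite mem_index_iota; case: n => // n _.
rewrite iter_ell_star; last exact: omega_notN.
by rewrite cats0 omega_notN ?mulr0 // Nword_nseqS.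
Qed.

End Omega.

(* The positivity of [alpha] and the smallness of [z] only guarantee that
   omega_k(z) exists; the identities hold for every solution of
   (1 - z L) w = e_{k,k}. *)
Theorem proposition6p1 (C : numClosedFieldType) (J : {set idx})
  (alpha : idx -> C) (halpha : forall a, a \in J -> 0 < alpha a)
  (p : {poly C}) (z : C) (hz : `|z| * (\sum_(a in J) alpha a) < 1) :
  (forall (j : 'I_2) (w : vec C), (j, j) \in J -> is_omega J alpha j z w ->
     forall u : word,
       fell J alpha p (j, j) w u =
         p.[alpha (j, j) ^+ 2 * z] * one_ J (j, j) w u
         + alpha (j, j) * (Dpoly p).[alpha (j, j) ^+ 2 * z] * Omega C u)
  /\
  (forall (i j k : 'I_2) (w : vec C), (i, j) \in J -> i != j ->
     (k, k) \in J -> is_omega J alpha k z w ->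
     forall u : word,
       fell J alpha p (i, j) w u = p.[alpha (i, j) ^+ 2 * z] * one_ J (i, j) w u).
Proof.
split=> [j w jJ hw [|b t] | i j k w ijJ ij kJ hw [|b t]].
- rewrite (fell_nil_diag jJ hw) /one_ eqxx /projN (omega_nil hw) if_same.
  by rewrite /Omega /delta eqxx mulr0 add0r mulr1.
- by rewrite (fell_cons jJ hw) // /Omega /delta /= mulr0 addr0.
- by rewrite (fell_nil_offdiag kJ hw) // /one_ (negbTE ij) /projN andbF mulr0.
- exact: (fell_cons kJ hw).
Qed.
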